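(* (a) The map $\Upsilon$ is a bijection from $\mathcal{D}$ to $\bar{\mathcal{D}}$. (b) $\theta_t(\bar{\mathcal{D}})\subseteq\bar{\mathcal{D}}$ for any $t\geq 0$. (c) $\Upsilon^{-1}\circ\theta_t\circ\Upsilon(\mathcal{D})\subseteq{\mathcal{D}}$ for any $t\geq 0$.
   Context: Fix $I\in\mathbb{N}$. $\mathcal{C}=\{f\in C(\mathbb{R}_+,\mathbb{R}_+):f(0)=0,f\text{ non-decreasing}\}$, $\mathcal{C}^\uparrow=\{f\in\mathcal{C}:f\text{ strictly increasing},\lim_{u\to\infty}f(u)=\infty\}$. For $\psi\in\mathcal{C}^I$, $\phi_i(u):=u-\sum_{j=1}^I2(i\wedge j)\psi_j(u)$. $\mathcal{F}:=\{\psi\in\mathcal{C}^I:\phi_I\in\mathcal{C}^\uparrow\}$; for $\psi\in\mathcal{F}$ each $\phi_i\in\mathcal{C}^\uparrow$ and $\Upsilon(\psi):=(\psi_i\circ\phi_i^{-1})_{i=1}^I$, which is a bijection $\mathcal{F}\to\mathcal{C}^I$ with inverse $\Upsilon^{-1}$. $\mathcal{D}:=\{\psi\in\mathcal{F}:\sum_{i=1}^Ii\sup_{u_1\ne u_2}\frac{\psi_i(u_1)-\psi_i(u_2)}{\phi_i(u_1)-\phi_i(u_2)}<\frac12\}$, $\bar{\mathcal{D}}:=\{\bar\psi\in\mathcal{C}^I:\sum_{i=1}^Ii\sup_{z_1\ne z_2}\frac{\bar\psi_i(z_1)-\bar\psi_i(z_2)}{z_1-z_2}<\frac12\}$. For $\bar\psi\in\mathcal{C}^I$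 and $t\ge0$, $(\theta_t\bar\psi)_i(z):=\bar\psi_i((z-it)\vee0)$. *)

From HB Require Import structures.
From mathcomp Require Import all_boot all_order all_algebra.
From mathcomp Require Import all_classical all_reals all_analysis.
Set Implicit Arguments. Unset Strict Implicit. Unset Printing Implicit Defensive.
Import Order.TTheory GRing.Theory Num.Theory.
Import numFieldNormedType.Exports.
Local Open Scope classical_set_scope.
Local Open Scope ring_scope.

(* Functions on R_+ are represented as functions R -> R of which only the
   values on [0, +oo) matter; all predicates below only look at u >= 0. *)
Section Defs.
Variable R : realType.

Definition isC (f : R -> R) : Prop :=
  [/\ {within [set x : R | 0 <= x], continuous f},
      f 0 = 0,
      (forall x y, 0 <= x -> x <= y -> f x <= f y) &
      (forall x, 0 <= x -> 0 <= f x)].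

Definition isCup (f : R -> R) : Prop :=
  [/\ isC f,
      (forall x y, 0 <= x -> x < y -> f x < f y) &
      f x @[x --> +oo] --> +oo].

Variable I : nat.

(* an element psi of C^I is indexed by i : 'I_I, standing for index i.+1 *)
Definition phiN (psi : 'I_I -> R -> R) (k : nat) (u : R) : R :=
  u - \sum_(j < I) 2 * (minn k j.+1)%:R * psi j u.

Definition phi (psi : 'I_I -> R -> R) (i : 'I_I) : R -> R := phiN psi i.+1.

Definition inC (psi : 'I_I -> R -> R) : Prop := forall i, isC (psi i).

Definition Fset (psi : 'I_I -> R -> R) : Prop :=
  inC psi /\ isCup (phiN psi I).

(* inverse on R_+ of a function (meaningful for f in C^up) *)
Definition finv (f : R -> R) (z : R) : R :=
  xget 0 [set u | 0 <= u /\ f u = z].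

Definition Upsilon (psi : 'I_I -> R -> R) : 'I_I -> R -> R :=
  fun i z => psi i (finv (phi psi i) z).

Definition supquot (g h : R -> R) : \bar R :=
  ereal_sup [set x : \bar R | exists u1 u2, [/\ 0 <= u1, 0 <= u2, u1 <> u2 &
                x = ((g u1 - g u2) / (h u1 - h u2))%:E]].

Definition Dset (psi : 'I_I -> R -> R) : Prop :=
  Fset psi /\
  (\sum_(i < I) (i.+1%:R)%:E * supquot (psi i) (phi psi i) < (2^-1)%:E)%E.

Definition Dbar (pb : 'I_I -> R -> R) : Prop :=
  inC pb /\
  (\sum_(i < I) (i.+1%:R)%:E * supquot (pb i) id < (2^-1)%:E)%E.

Definition theta (t : R) (pb : 'I_I -> R -> R) : 'I_I -> R -> R :=
  fun i z => pb i (Num.max (z - i.+1%:R * t) 0).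

Definition eqI (f g : 'I_I -> R -> R) : Prop :=
  forall i z, 0 <= z -> f i z = g i z.

End Defs.

(* On R_+ we have psi_i = Upsilon(psi)_i o phi_i with phi_i a bijection of
   R_+, so the slope bound of psi_i relative to phi_i is the Lipschitz
   constant of Upsilon(psi)_i: the conditions defining D and Dbar match, and
   theta_t, a shift followed by truncation at 0, does not increase Lipschitz
   constants.  If Upsilon(psi) = pb, the values a_k = phi_k(u) solve
   a_k = u - sum_j 2 (k /\ j) pb_j(a_j); for two solutions,
   Q = sum_j L_j |a_j - b_j| satisfies Q <= 2 (sum_j j L_j) Q with
   2 sum_j j L_j < 1, hence Q = 0: this is injectivity.  For surjectivity,
   parametrise by s = phi_I(u): going down from phi_I, every phi_k, and
   u = phi_0 itself, is an explicit bi-Lipschitz function of s, and inverting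
   s |-> u defines psi. *)

From mathcomp Require Import all_boot all_order all_algebra.
From mathcomp Require Import all_classical all_reals all_analysis.
From mathcomp Require Import lra zify.
Set Implicit Arguments. Unset Strict Implicit. Unset Printing Implicit Defensive.
Import Order.TTheory GRing.Theory Num.Theory.
Import numFieldNormedType.Exports.
Local Open Scope classical_set_scope.
Local Open Scope ring_scope.

Section Slopes.
Variable R : realType.
Implicit Types (a b c x y z u : R) (f g h : R -> R).

Definition nondecr_nonneg f := forall x y, 0 <= x -> x <= y -> f x <= f y.

Definition slopes_in a b f :=
  forall x y, 0 <= x -> x <= y -> a * (y - x) <= f y - f x <= b * (y - x).

Lemma slopes_in_le a b f : slopes_in a b f -> a <= b.
Proof.
by move=> /(_ 0 1 (lexx 0) ler01) /andP[]; rewrite subr0 !mulr1; apply: le_trans.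
Qed.

Lemma slopes_inW a b b' f : b <= b' -> slopes_in a b f -> slopes_in a b' f.
Proof.
move=> bb hf x y x0 xy; have /andP[-> h] := hf x y x0 xy.
by apply: le_trans h _; rewrite ler_wpM2r // subr_ge0.
Qed.

Lemma slopes_in_nondecr a b f : 0 <= a -> slopes_in a b f -> nondecr_nonneg f.
Proof.
move=> a0 hf x y x0 xy; have /andP[h _] := hf x y x0 xy.
by rewrite -subr_ge0; apply: le_trans h; rewrite mulr_ge0 // subr_ge0.
Qed.

Lemma slopes_in_dist a b f x y : 0 <= a -> slopes_in a b f -> 0 <= x -> 0 <= y ->
  `|f x - f y| <= b * `|x - y|.
Proof.
move=> a0 hf; wlog xy : x y / x <= y => [H x0 y0|x0 _].
  by case: (leP x y) => [|/ltW] xy; [|rewrite distrC (distrC x)]; apply: H.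
have /andP[_ h] := hf x y x0 xy.
by rewrite distrC (distrC x) !ger0_norm ?subr_ge0 // (slopes_in_nondecr a0 hf).
Qed.

Lemma lipschitz_within_continuous (D : set R) b f :
  (forall x y, D x -> D y -> `|f x - f y| <= b * `|x - y|) ->
  {within D, continuous f}.
Proof.
move=> hf; apply/subspace_continuousP => x Dx; apply/cvgrPdist_le => e e0.
have b1 : 0 < `|b| + 1 by rewrite ltr_pwDr.
have eb : 0 < e / (`|b| + 1) by rewrite divr_gt0.
near=> y.
have Dy : D y by near: y; exact: withinT.
have xy : `|x - y| < e / (`|b| + 1).
  by near: y; apply: cvg_within; exact: (@cvgr_dist_lt _ _ _ (nbhs x) _ id x cvg_id).
rewrite /from_subspace; apply: (le_trans (hf x y Dx Dy)).
rewrite -[e](@divfK _ (`|b| + 1)) ?gt_eqF // [X in _ <= X]mulrC.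
apply: le_trans (ler_wpM2r (normr_ge0 _) (ler_norm b)) _.
have bb : `|b| <= `|b| + 1 by rewrite lerDl.
apply: le_trans (ler_wpM2r (normr_ge0 _) bb) _.
by rewrite ler_pM2l // ltW.
Unshelve. all: end_near.
Qed.

Lemma slopes_in_isC a b f : 0 <= a -> f 0 = 0 -> slopes_in a b f -> isC f.
Proof.
move=> a0 f0 hf; have mf := slopes_in_nondecr a0 hf; split => //.
- apply: lipschitz_within_continuous => x y x0 y0.
  exact: slopes_in_dist a0 hf x0 y0.
- by move=> x x0; rewrite -f0; apply: mf.
Qed.

Lemma slopes_in_comp a b c d f g : 0 <= a -> 0 <= c ->
  (forall x, 0 <= x -> 0 <= f x) -> slopes_in a b f -> slopes_in c d g ->
  slopes_in (c * a) (d * b) (g \o f).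
Proof.
move=> a0 c0 fp hf hg x y x0 xy.
have d0 : 0 <= d := le_trans c0 (slopes_in_le hg).
have /andP[f1 f2] := hf x y x0 xy.
have /andP[g1 g2] := hg (f x) (f y) (fp x x0) (slopes_in_nondecr a0 hf x0 xy).
by rewrite /= -!mulrA; apply/andP; split;
  [apply: le_trans g1; rewrite ler_wpM2l | apply: le_trans g2 _; rewrite ler_wpM2l].
Qed.

Lemma slopes_in_max0 c : slopes_in 0 1 (fun z => Num.max (z - c) 0).
Proof.
move=> x y _ xy; rewrite mul0r mul1r.
by case: (leP (x - c) 0); case: (leP (y - c) 0) => hy hx; apply/andP; split; lra.
Qed.

Lemma Cup_ge f g : isCup g -> f 0 = 0 -> {within [set x | 0 <= x], continuous f} ->
  (forall x y, 0 <= x -> x <= y -> g y - g x <= f y - f x) -> isCup f.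
Proof.
move=> [[_ g0 gm _] gs glim] f0 fc hfg.
have fm : nondecr_nonneg f.
  move=> x y x0 xy; rewrite -subr_ge0; apply: le_trans (hfg x y x0 xy).
  by rewrite subr_ge0 gm.
split; first by split => // x x0; rewrite -f0 fm.
- move=> x y x0 xy; rewrite -subr_gt0; apply: lt_le_trans (hfg x y x0 (ltW xy)).
  by rewrite subr_gt0 gs.
- apply: ger_cvgy glim; near=> x.
  have x0 : 0 <= x by near: x; apply: nbhs_pinfty_ge.
  by have := hfg 0 x (lexx 0) x0; rewrite f0 g0 !subr0.
Unshelve. all: end_near.
Qed.

Lemma slopes_in_Cup a b f : 0 < a -> f 0 = 0 -> slopes_in a b f -> isCup f.
Proof.
move=> a0 f0 hf; have f_ge x : 0 <= x -> a * x <= f x.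
  by move=> x0; have /andP[] := hf 0 x (lexx 0) x0; rewrite f0 !subr0.
split; first exact: slopes_in_isC (ltW a0) f0 hf.
- move=> x y x0 xy; have /andP[h _] := hf x y x0 (ltW xy).
  by rewrite -subr_gt0; apply: lt_le_trans h; rewrite mulr_gt0 // subr_gt0.
- apply/cvgryPge => A; near=> x.
  have x0 : 0 <= x by near: x; apply: nbhs_pinfty_ge.
  have Ax : A / a <= x by near: x; apply: nbhs_pinfty_ge; rewrite num_real.
  by apply: le_trans (f_ge x x0); rewrite -ler_pdivrMl.
Unshelve. all: end_near.
Qed.

Lemma Cup_surj f z : isCup f -> 0 <= z -> exists2 u, 0 <= u & f u = z.
Proof.
move=> [[fc f0 _ _] _ flim] z0.
move/cvgryPge: flim => /(_ z) [M [_ hM]].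
have [U0 MU] : 0 <= Num.max M 0 + 1 /\ M < Num.max M 0 + 1.
  by case: (leP M 0) => h; split; lra.
have := hM _ MU; set U := Num.max M 0 + 1 => zU.
have [u] : exists2 u, u \in `[0, U] & f u = z.
  apply: IVT => //.
    apply: continuous_subspaceW fc.
    by move=> x /=; rewrite in_itv /= => /andP[].
  by rewrite f0 min_l ?max_r ?z0 // (le_trans z0).
by rewrite in_itv /= => /andP[u0 _] fu; exists u.
Qed.

Lemma Cup_inj f x y : isCup f -> 0 <= x -> 0 <= y -> f x = f y -> x = y.
Proof.
move=> [_ fs _] x0 y0 fxy.
by case: (ltgtP x y) => // [/(fs _ _ x0)|/(fs _ _ y0)]; rewrite fxy ltxx.
Qed.

Lemma Cup_finvP f z : isCup f -> 0 <= z -> 0 <= finv f z /\ f (finv f z) = z.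
Proof.
move=> hf z0; apply: (@xgetPex _ 0 [set u | 0 <= u /\ f u = z]).
by have [u u0 fu] := Cup_surj hf z0; exists u.
Qed.

Lemma Cup_finvK f u : isCup f -> 0 <= u -> finv f (f u) = u.
Proof.
move=> hf u0; have [[_ _ _ fp] _ _] := hf.
have [v0 fv] := Cup_finvP hf (fp u u0).
exact: Cup_inj hf v0 u0 fv.
Qed.

Lemma Cup_finv_nondecr f : isCup f -> nondecr_nonneg (finv f).
Proof.
move=> hf x y x0 xy; have [_ fs _] := hf.
have [a0 fa] := Cup_finvP hf x0; have [b0 fb] := Cup_finvP hf (le_trans x0 xy).
rewrite leNgt; apply/negP => /(fs _ _ b0).
by rewrite fa fb ltNge xy.
Qed.

Lemma finv_slopes_in a b f : 0 < a -> f 0 = 0 -> slopes_in a b f ->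
  slopes_in b^-1 a^-1 (finv f).
Proof.
move=> a0 f0 hf x y x0 xy.
have hC := slopes_in_Cup a0 f0 hf.
have b0 : 0 < b := lt_le_trans a0 (slopes_in_le hf).
have [gx0 fgx] := Cup_finvP hC x0; have [_ fgy] := Cup_finvP hC (le_trans x0 xy).
have /andP[h1 h2] := hf _ _ gx0 (Cup_finv_nondecr hC x0 xy).
rewrite fgx fgy in h1 h2.
by rewrite mulrC ler_pdivrMr // mulrC h2 andTb mulrC ler_pdivlMr // mulrC.
Qed.

Lemma eq_supquot g1 g2 h : (forall x, 0 <= x -> g1 x = g2 x) ->
  supquot g1 h = supquot g2 h.
Proof.
move=> e; rewrite /supquot; congr ereal_sup; apply/seteqP.
by split=> _ [u1 [u2 [u10 u20 u12 ->]]]; exists u1, u2; rewrite !e.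
Qed.

Lemma supquot_finv g h : isCup h -> supquot g h = supquot (g \o finv h) id.
Proof.
move=> hC; rewrite /supquot; congr ereal_sup; apply/seteqP.
split=> _ [u1 [u2 [u10 u20 u12 ->]]].
- have [[_ _ _ hp] _ _] := hC.
  exists (h u1), (h u2); split; rewrite ?hp //= ?Cup_finvK //.
  by move/(Cup_inj hC u10 u20).
- have [v10 hv1] := Cup_finvP hC u10; have [v20 hv2] := Cup_finvP hC u20.
  exists (finv h u1), (finv h u2); split; rewrite ?hv1 ?hv2 //.
  by move=> e; apply: u12; rewrite -hv1 -hv2 e.
Qed.

Lemma supquot_id_ge0 g : nondecr_nonneg g -> (0 <= supquot g id)%E.
Proof.
move=> gm; apply: le_trans (ereal_sup_ubound _); last first.
  by exists 0, 1; split => //; apply/eqP; rewrite eq_sym oner_eq0.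
by rewrite lee_fin /= sub0r invrN invr1 mulrN1 opprB subr_ge0 gm.
Qed.

Lemma supquot_id_le g L : slopes_in 0 L g -> (supquot g id <= L%:E)%E.
Proof.
move=> hg; apply: ge_ereal_sup => _ [u1 [u2 [u10 u20 u12 ->]]].
have d0 : 0 < `|u1 - u2| by rewrite normr_gt0 subr_eq0; apply/eqP.
rewrite lee_fin /=; apply: le_trans (ler_norm _) _.
rewrite normrM normfV ler_pdivrMr //.
exact: slopes_in_dist (lexx 0) hg u10 u20.
Qed.

Lemma supquot_id_slopes g L : nondecr_nonneg g -> (supquot g id <= L%:E)%E ->
  slopes_in 0 L g.
Proof.
move=> gm hL x y x0 xy; rewrite mul0r subr_ge0 gm //=.
have [->|xy'] := eqVneq x y; first by rewrite !subrr mulr0.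
have yx : 0 < y - x by rewrite subr_gt0 lt_neqAle xy' xy.
rewrite -ler_pdivrMr // -lee_fin; apply: le_trans hL.
apply: ereal_sup_ubound; exists y, x; split => //; first exact: le_trans xy.
by apply/eqP; rewrite eq_sym.
Qed.

End Slopes.

Section Upsilon.
Variables (R : realType) (I : nat).
Implicit Types (psi pb : 'I_I -> R -> R) (x y z u t : R).

Lemma phiN_continuous psi k : inC psi ->
  {within [set x | 0 <= x], continuous (phiN psi k)}.
Proof.
move=> hC x; apply: cvgB; first by apply: continuous_subspaceT => y; exact: cvg_id.
apply: cvg_big => //; first exact: add_continuous.
by move=> j _; apply: cvgMl_tmp; case: (hC j) => + _ _ _; apply.
Qed.

Lemma phiN0 psi k : inC psi -> phiN psi k 0 = 0.
Proof.
by move=> hC; rewrite /phiN big1 ?subr0 // => j _; case: (hC j) => _ -> _ _; rewrite mulr0.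
Qed.

Lemma phiN_incr_ge psi k x y : inC psi -> (k <= I)%N -> 0 <= x -> x <= y ->
  phiN psi I y - phiN psi I x <= phiN psi k y - phiN psi k x.
Proof.
move=> hC kI x0 xy; rewrite /phiN.
set SIy := \sum_(j < I) _; set SIx := \sum_(j < I) _.
set Sky := \sum_(j < I) _; set Skx := \sum_(j < I) _.
suff : Sky - Skx <= SIy - SIx by lra.
rewrite -!sumrB ler_sum // => j _; rewrite -!mulrBr.
have [_ _ hm _] := hC j; have d0 : 0 <= psi j y - psi j x by rewrite subr_ge0 hm.
by rewrite ler_wpM2r // ler_wpM2l // ler_nat; lia.
Qed.

Lemma Fset_phi_Cup psi i : Fset psi -> isCup (phi psi i).
Proof.
move=> [hC hI]; apply: (Cup_ge hI); [exact: phiN0 | exact: phiN_continuous |].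
by move=> x y x0 xy; apply: phiN_incr_ge.
Qed.

Lemma Upsilon_phi psi i u : Fset psi -> 0 <= u ->
  Upsilon psi i (phi psi i u) = psi i u.
Proof. by move=> hF u0; rewrite /Upsilon Cup_finvK //; exact: Fset_phi_Cup. Qed.

Lemma Upsilon0 psi i : Fset psi -> Upsilon psi i 0 = 0.
Proof.
move=> hF; have [[_ p0 _ _] _ _] := Fset_phi_Cup i hF.
by rewrite -{1}p0 Upsilon_phi //; case: (hF.1 i).
Qed.

Lemma Upsilon_nondecr psi i : Fset psi -> nondecr_nonneg (Upsilon psi i).
Proof.
move=> hF x y x0 xy; have hC := Fset_phi_Cup i hF; have [_ _ psim _] := hF.1 i.
by apply: psim; [exact: (Cup_finvP hC x0).1 | exact: Cup_finv_nondecr].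
Qed.

Lemma eqI_Upsilon psi pb : Fset psi ->
  (forall i u, 0 <= u -> psi i u = pb i (phi psi i u)) -> eqI (Upsilon psi) pb.
Proof.
move=> hF hpsi i z z0; have [u0 phiu] := Cup_finvP (Fset_phi_Cup i hF) z0.
by rewrite /Upsilon hpsi // phiu.
Qed.

Lemma phi_fixpoint psi pb k u : Fset psi -> eqI (Upsilon psi) pb -> 0 <= u ->
  phi psi k u = u - \sum_(j < I) 2 * (minn k.+1 j.+1)%:R * pb j (phi psi j u).
Proof.
move=> hF he u0; congr (_ - _); apply: eq_bigr => j _.
have [[_ _ _ phi_ge0] _ _] := Fset_phi_Cup j hF.
by rewrite -he ?phi_ge0 // Upsilon_phi.
Qed.

Lemma supquot_Upsilon psi i : Fset psi ->
  supquot (psi i) (phi psi i) = supquot (Upsilon psi i) id.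
Proof. by move=> hF; rewrite supquot_finv //; exact: Fset_phi_Cup. Qed.

Definition small_slopes pb (L : 'I_I -> R) :=
  \sum_(i < I) i.+1%:R * L i < 2^-1 /\ forall i, slopes_in 0 (L i) (pb i).

Lemma supquot_small_slopes pb : (forall i, nondecr_nonneg (pb i)) ->
  (\sum_(i < I) (i.+1%:R)%:E * supquot (pb i) id < (2^-1)%:E)%E ->
  exists L, small_slopes pb L.
Proof.
move=> pbm hs; have q0 i := supquot_id_ge0 (pbm i).
have qfin i : supquot (pb i) id \is a fin_num.
  rewrite ge0_fin_numE // ltNge leye_eq; apply/negP => /eqP qy.
  have : ((i.+1%:R)%:E * supquot (pb i) id <=
          \sum_(j < I) (j.+1%:R)%:E * supquot (pb j) id)%E.
    by rewrite (bigD1 i) //= leeDl // sume_ge0 // => j _; rewrite mule_ge0.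
  by rewrite qy mulry gtr0_sg // mul1e leye_eq => /eqP sy; move: hs; rewrite sy.
exists (fun i => fine (supquot (pb i) id)); split.
  by rewrite -lte_fin -sumEFin; under eq_bigr do rewrite EFinM (fineK (qfin _)).
by move=> i; apply: supquot_id_slopes; rewrite ?fineK.
Qed.

Lemma small_slopes_supquot pb L : small_slopes pb L ->
  (\sum_(i < I) (i.+1%:R)%:E * supquot (pb i) id < (2^-1)%:E)%E.
Proof.
move=> [hs hL]; apply: (@le_lt_trans _ _ (\sum_(i < I) i.+1%:R * L i)%:E).
  rewrite -sumEFin; apply: lee_sum => i _; rewrite EFinM lee_wpmul2l ?lee_fin //.
  exact: supquot_id_le.
by rewrite lte_fin.
Qed.

Lemma Dbar_small_slopes pb : Dbar pb -> exists L, small_slopes pb L.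
Proof. by move=> [hC hs]; apply: supquot_small_slopes hs => i; case: (hC i). Qed.

Lemma small_slopes_Dbar pb L : (forall i, pb i 0 = 0) -> small_slopes pb L -> Dbar pb.
Proof.
move=> pb0 hL; split; last exact: small_slopes_supquot hL.
by move=> i; apply: slopes_in_isC (lexx 0) (pb0 i) (hL.2 i).
Qed.

Lemma Dset_Dbar psi : Dset psi -> Dbar (Upsilon psi).
Proof.
move=> [hF]; rewrite (eq_bigr _ (fun i _ => congr1 _ (supquot_Upsilon i hF))) => hs.
have [L hL] := supquot_small_slopes (fun i => Upsilon_nondecr i hF) hs.
exact: small_slopes_Dbar (fun i => Upsilon0 i hF) hL.
Qed.

Lemma Dbar_Dset psi pb : Fset psi -> Dbar pb -> eqI (Upsilon psi) pb -> Dset psi.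
Proof.
move=> hF [_ hs] he; split => //.
by under eq_bigr do rewrite supquot_Upsilon // (eq_supquot _ (he _)).
Qed.

Lemma Dbar_theta t pb : 0 <= t -> Dbar pb -> Dbar (theta t pb).
Proof.
move=> t0 hD; have [L [hs hL]] := Dbar_small_slopes hD.
apply: (@small_slopes_Dbar _ L).
  move=> i; rewrite /theta sub0r max_r ?oppr_le0 ?mulr_ge0 //.
  by case: (hD.1 i).
split => // i; have max_ge0 x : 0 <= x -> 0 <= Num.max (x - i.+1%:R * t) 0.
  by move=> _; rewrite le_max lexx orbT.
have := slopes_in_comp (lexx 0) (lexx 0) max_ge0 (slopes_in_max0 _) (hL i).
by rewrite mul0r mulr1.
Qed.

Lemma phi_fixpoint_unique pb L u (a b : 'I_I -> R) : small_slopes pb L ->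
  (forall k, 0 <= a k) -> (forall k, 0 <= b k) ->
  (forall k, a k = u - \sum_(j < I) 2 * (minn k.+1 j.+1)%:R * pb j (a j)) ->
  (forall k, b k = u - \sum_(j < I) 2 * (minn k.+1 j.+1)%:R * pb j (b j)) ->
  forall k, a k = b k.
Proof.
move=> [hs hL] a0 b0 ha hb.
have L0 j : 0 <= L j := slopes_in_le (hL j).
pose Q := \sum_(j < I) L j * `|a j - b j|.
have Q0 : 0 <= Q by apply: sumr_ge0 => j _; rewrite mulr_ge0.
have dist_le k : `|a k - b k| <= 2 * k.+1%:R * Q.
  rewrite ha hb opprB addrC addrA subrK -sumrB mulr_sumr.
  apply: le_trans (ler_norm_sum _ _ _) _; apply: ler_sum => j _.
  rewrite -mulrBr normrM ger0_norm //.
  have m_le : (minn k.+1 j.+1)%:R <= k.+1%:R :> R by rewrite ler_nat geq_minl.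
  have := slopes_in_dist (lexx 0) (hL j) (b0 j) (a0 j).
  rewrite (distrC (b j)) => hX.
  have m0 : 0 <= 2 * (minn k.+1 j.+1)%:R :> R by [].
  apply: le_trans (ler_wpM2l m0 hX) _; rewrite ler_wpM2r ?mulr_ge0 //.
  by rewrite ler_wpM2l.
have Q_le : Q <= \sum_(j < I) L j * (2 * j.+1%:R * Q).
  by apply: ler_sum => j _; rewrite ler_wpM2l.
clearbody Q.
have contraction : Q <= (2 * \sum_(j < I) j.+1%:R * L j) * Q.
  apply: le_trans Q_le _; rewrite mulr_sumr mulr_suml.
  by apply: ler_sum => j _; rewrite mulrC -!mulrA [Q * _]mulrC.
have Q_eq0 : Q = 0 by nra.
by move=> k; apply/eqP; rewrite -subr_eq0 -normr_le0 -(mulr0 (2 * k.+1%:R)) -Q_eq0.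
Qed.

Lemma Upsilon_inj psi1 psi2 : Dset psi1 -> Fset psi2 ->
  eqI (Upsilon psi1) (Upsilon psi2) -> eqI psi1 psi2.
Proof.
move=> hD1 hF2 he i u u0; have hF1 := hD1.1.
have [L hL] := Dbar_small_slopes (Dset_Dbar hD1).
have phi_ge0 psi j : Fset psi -> 0 <= phi psi j u.
  by move=> hF; have [[_ _ _ ->]] := Fset_phi_Cup j hF.
have he' : eqI (Upsilon psi2) (Upsilon psi1) by move=> j z z0; rewrite he.
have := phi_fixpoint_unique hL (fun j => phi_ge0 psi1 j hF1)
  (fun j => phi_ge0 psi2 j hF2) (fun k => phi_fixpoint k hF1 (fun _ _ _ => erefl) u0)
  (fun k => phi_fixpoint k hF2 he' u0) i.
by rewrite -(Upsilon_phi i hF1 u0) -(Upsilon_phi i hF2 u0) he ?phi_ge0 // => ->.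
Qed.

Section Construction.
Variable pb : 'I_I -> R -> R.
Hypothesis pb0 : forall i, pb i 0 = 0.
Hypothesis pb_slopes : forall i, slopes_in 0 1 (pb i).

Definition pbn (n : nat) : R -> R := oapp pb (fun=> 0) (insub n).

Lemma pbnE (j : 'I_I) : pbn j = pb j.
Proof. by rewrite /pbn valK. Qed.

Lemma pbn_slopes n : slopes_in 0 1 (pbn n) /\ pbn n 0 = 0.
Proof.
rewrite /pbn; case: insub => [j|] //=; split => // x y _ xy.
by rewrite subrr mul0r mul1r lexx subr_ge0.
Qed.

(* For s = phi_I(u): [lvl n s] = phi_(I-n)(u) and [lvl_tail n s] is the sum
   of the psi_j(u), j > I - n (1-based), computed downwards from
   phi_(k-1) = phi_k + 2 sum_(j >= k) psi_j with psi_j = pb_j o phi_j. *)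
Fixpoint lvl_pair (n : nat) (s : R) : R * R :=
  if n is m.+1 then
    let p := lvl_pair m s in
    let t := p.2 + pbn (I - m.+1) p.1 in (p.1 + 2 * t, t)
  else (s, 0).

Definition lvl n s := (lvl_pair n s).1.
Definition lvl_tail n s := (lvl_pair n s).2.

Lemma lvlS n s : lvl n.+1 s = lvl n s + 2 * lvl_tail n.+1 s.
Proof. by []. Qed.

Lemma lvl_tailS n s : lvl_tail n.+1 s = lvl_tail n s + pbn (I - n.+1) (lvl n s).
Proof. by []. Qed.

Lemma lvl0 n : lvl n 0 = 0 /\ lvl_tail n 0 = 0.
Proof.
elim: n => [|n [w0 t0]] //; rewrite lvlS !lvl_tailS w0 t0 (pbn_slopes _).2.
by rewrite !addr0 mulr0 addr0.
Qed.

Lemma lvl_slopes n : exists K, slopes_in 0 K (lvl_tail n) /\ slopes_in 1 K (lvl n).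
Proof.
elim: n => [|n [K [hT hw]]].
  exists 1; split=> x y _ xy; rewrite /lvl /lvl_tail /= ?subrr; lra.
have K0 : 0 <= K := le_trans ler01 (slopes_in_le hw).
have [_ _ _ lvl_ge0] := slopes_in_isC ler01 (lvl0 n).1 hw.
have := slopes_in_comp ler01 (lexx 0) lvl_ge0 hw (pbn_slopes (I - n.+1)).1.
rewrite mul0r mul1r => hp.
exists (5 * K); split=> x y x0 xy; have /andP[p1 p2] := hp x y x0 xy;
  have /andP[t1 t2] := hT x y x0 xy; have /andP[w1 w2] := hw x y x0 xy;
  rewrite /= in p1 p2; rewrite ?lvlS !lvl_tailS; nra.
Qed.

Lemma lvl_tail_sum n s : (n <= I)%N ->
  lvl_tail n s = \sum_(j < I | (I - n <= j)%N) pb j (lvl (I - j.+1) s).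
Proof.
elim: n => [|n IH] nI.
  by rewrite big_pred0 // => j; rewrite subn0 leqNgt ltn_ord.
have jI : (I - n.+1 < I)%N by lia.
rewrite lvl_tailS [RHS](bigD1 (Ordinal jI)) //= addrC; congr (_ + _).
  rewrite IH 1?ltnW //; apply: eq_bigl => j; rewrite -(inj_eq val_inj) /=; lia.
rewrite -[(I - n.+1)%N]/(val (Ordinal jI)) pbnE; congr (pb _ (lvl _ s)) => /=; lia.
Qed.

Lemma lvl_sum k s : (k <= I)%N ->
  lvl (I - k) s = lvl I s - \sum_(j < I) 2 * (minn k j.+1)%:R * pb j (lvl (I - j.+1) s).
Proof.
elim: k => [|k IH] kI.
  by rewrite subn0 big1 ?subr0 // => j _; rewrite min0n mulr0 mul0r.
have Ik : (I - k = (I - k.+1).+1)%N by lia.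
have step : lvl (I - k) s = lvl (I - k.+1) s + 2 * lvl_tail (I - k) s.
  by rewrite Ik.
have kI' := ltnW kI.
rewrite lvl_tail_sum ?leq_subr // subKn // IH // in step.
have -> : \sum_(j < I) 2 * (minn k.+1 j.+1)%:R * pb j (lvl (I - j.+1) s) =
    \sum_(j < I) 2 * (minn k j.+1)%:R * pb j (lvl (I - j.+1) s) +
    2 * \sum_(j < I | (k <= j)%N) pb j (lvl (I - j.+1) s).
  rewrite [X in _ + 2 * X]big_mkcond mulr_sumr -big_split; apply: eq_bigr => j _ /=.
  case: leqP => kj; last by rewrite !(minn_idPr _) ?mulr0 ?addr0 //; lia.
  by rewrite !(minn_idPl _) -?natr1 ?mulrDr ?mulrDl ?mulr1 //; lia.
by rewrite opprD addrA step addrK.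
Qed.

Lemma lvl_Cup : isCup (lvl I).
Proof. by have [K [_ hw]] := lvl_slopes I; exact: slopes_in_Cup ltr01 (lvl0 I).1 hw. Qed.

Definition phi_top := finv (lvl I).

Lemma phi_top0 : phi_top 0 = 0.
Proof. by rewrite /phi_top -{1}(lvl0 I).1 Cup_finvK //; exact: lvl_Cup. Qed.

Lemma phi_top_slopes : exists2 K, 0 < K & slopes_in K^-1 1 phi_top.
Proof.
have [K [_ hw]] := lvl_slopes I; exists K; first exact: lt_le_trans ltr01 (slopes_in_le hw).
by rewrite -[X in slopes_in _ X]invr1; apply: finv_slopes_in ltr01 (lvl0 I).1 hw.
Qed.

Definition psi_of (i : 'I_I) : R -> R := pb i \o lvl (I - i.+1) \o phi_top.

Lemma phiN_psi_of k u : (k <= I)%N -> 0 <= u ->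
  phiN psi_of k u = lvl (I - k) (phi_top u).
Proof. by move=> kI u0; rewrite lvl_sum // (Cup_finvP lvl_Cup u0).2. Qed.

Lemma Fset_psi_of : Fset psi_of.
Proof.
have [K K0 hG] := phi_top_slopes; have K'0 : 0 <= K^-1 by rewrite invr_ge0 ltW.
have [_ _ _ G_ge0] := slopes_in_isC K'0 phi_top0 hG.
split.
  move=> i; have [K' [_ hw]] := lvl_slopes (I - i.+1).
  have [_ _ _ w_ge0] := slopes_in_isC ler01 (lvl0 _).1 hw.
  have hwG := slopes_in_comp K'0 ler01 G_ge0 hG hw.
  have wG_ge0 x : 0 <= x -> 0 <= (lvl (I - i.+1) \o phi_top) x.
    by move=> x0; apply/w_ge0/G_ge0.
  have := slopes_in_comp (mulr_ge0 ler01 K'0) (lexx 0) wG_ge0 hwG (pb_slopes i).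
  rewrite mul0r => h; apply: slopes_in_isC (lexx 0) _ h.
  by rewrite /= phi_top0 (lvl0 _).1 pb0.
apply: (slopes_in_Cup (a := K^-1)); first by rewrite invr_gt0.
  by rewrite phiN_psi_of // subnn phi_top0.
move=> x y x0 xy; rewrite !phiN_psi_of ?subnn ?(le_trans x0 xy) //; exact: hG.
Qed.

Lemma Upsilon_psi_of : eqI (Upsilon psi_of) pb.
Proof. by apply: eqI_Upsilon Fset_psi_of _ => i u u0; rewrite /phi phiN_psi_of. Qed.

End Construction.

Lemma Upsilon_surj pb : Dbar pb -> exists psi, Dset psi /\ eqI (Upsilon psi) pb.
Proof.
move=> hD; have [L [hs hL]] := Dbar_small_slopes hD.
have pb0 i : pb i 0 = 0 by case: (hD.1 i).
have pb_slopes i : slopes_in 0 1 (pb i).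
  apply: slopes_inW (hL i); have L0 j : 0 <= L j := slopes_in_le (hL j).
  have : i.+1%:R * L i <= \sum_(j < I) j.+1%:R * L j.
    by rewrite (bigD1 i) //= lerDl sumr_ge0 // => j _; rewrite mulr_ge0.
  have : L i <= i.+1%:R * L i by rewrite ler_peMl // ler1n.
  have : 2^-1 <= 1 :> R by rewrite invf_le1 // ler1n.
  lra.
exists (psi_of pb); have hU := Upsilon_psi_of pb0 pb_slopes.
by split => //; apply: Dbar_Dset (Fset_psi_of pb0 pb_slopes) hD hU.
Qed.

End Upsilon.

Theorem proposition3p8 (R : realType) (I : nat) :
  (* (a) Upsilon is a bijection from D onto Dbar *)
  ((forall psi, Dset psi -> Dbar (@Upsilon R I psi)) /\
   (forall psi1 psi2 : 'I_I -> R -> R, Dset psi1 -> Dset psi2 ->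
      eqI (Upsilon psi1) (Upsilon psi2) -> eqI psi1 psi2) /\
   (forall pb : 'I_I -> R -> R, Dbar pb ->
      exists psi, Dset psi /\ eqI (Upsilon psi) pb)) /\
  (* (b) theta_t(Dbar) is contained in Dbar *)
  (forall t : R, 0 <= t -> forall pb : 'I_I -> R -> R, Dbar pb -> Dbar (theta t pb)) /\
  (* (c) Upsilon^{-1} o theta_t o Upsilon (D) is contained in D *)
  (forall t : R, 0 <= t -> forall psi : 'I_I -> R -> R, Dset psi ->
     (exists psi', Dset psi' /\ eqI (Upsilon psi') (theta t (Upsilon psi))) /\
     (forall psi', Fset psi' -> eqI (Upsilon psi') (theta t (Upsilon psi)) ->
        Dset psi')).
Proof.
split; [split; [|split] | split].
- exact: Dset_Dbar.
- by move=> psi1 psi2 hD1 [hF2 _]; exact: Upsilon_inj.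
- exact: Upsilon_surj.
- by move=> t t0 pb; exact: Dbar_theta.
- move=> t t0 psi hD; have hDt := Dbar_theta t0 (Dset_Dbar hD).
  by split; [exact: Upsilon_surj | move=> psi' hF; exact: Dbar_Dset hF hDt].
Qed.
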